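(* In the storage model of the context, suppose the linear system \[ \sum_{j=1}^{\kappa_i}\alpha_{ij}=\lambda_i\ (i=1,\dots,\mathcal K),\qquad \sum_{i=1}^{\mathcal K}\sum_{j=1}^{\kappa_i}\alpha_{ij}\,\delta_{\ell,s^i_j}=\tfrac1n\ (\ell=1,\dots,n) \] has a positive solution $(\alpha_{ij})$, let $0<\varepsilon<\min_{i,j}\alpha_{ij}$, and let the embedded load chain $X^e(m)$ be constructed using the $\varepsilon$-PSERP. Then for every $x\in\mathbb N^n$, \[ \mathbf E[f(X^e(m+1))-f(X^e(m))\mid X^e(m)=x]=-2\varepsilon\sum_{i=1}^{\mathcal K}\bigl(x_{s^i_{j_{\max}}(x)}-x_{s^i_{j_{\min}}(x)}\bigr)+1-\frac1n, \] where $f(y)=\sum_{l=1}^n\bigl(y_l-\frac1n\sum_{k=1}^ny_k\bigr)^2$.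
   Context: Storage model: $n$ nodes, non-empty neighborhoods $S_1,\dots,S_{\mathcal K}\subset\{1,\dots,n\}$ covering $\{1,\dots,n\}$, $\kappa_i=|S_i|$, $S_i=\{s^i_1,\dots,s^i_{\kappa_i}\}$ a fixed enumeration. Items arrive at $S_i$ as independent Poisson processes with rates $\lambda_i>0$, $\sum_i\lambda_i=1$; each item is stored at one node of its neighborhood according to the routing policy, independently across arrivals. $X^e(m)\in\mathbb N^n$ is the vector of node loads after the $m$-th arrival. For $x\in\mathbb N^n$, $s^i_{j_{\min}}(x)$ is the first node of $S_i$ (in the enumeration) at which $x$ is minimal over $S_i$, and $s^i_{j_{\max}}(x)$ is the last node of $S_i$ at which $x$ is maximal over $S_i$. $\varepsilon$-PSERP: an item arriving at $S_i$ when the configuration is $x$ is sent to $s^i_j$ with probability $(\alpha_{ij}+\varepsilon)/\lambda_i$ if $s^i_j=s^i_{j_{\min}}(x)$, $(\alpha_{ij}-\varepsilon)/\lambda_i$ if $s^i_j=s^i_{j_{\max}}(x)$, and $\alpha_{ij}/\lambda_i$ otherwise; if $\kappa_i=1$ the item goes to the unique node of $S_i$. $\delta_{\ell,m}$ is the Kronecker delta. *)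

From mathcomp Require Import all_boot all_order all_algebra.
Set Implicit Arguments. Unset Strict Implicit. Unset Printing Implicit Defensive.
Import Order.TTheory GRing.Theory Num.Theory.
Local Open Scope ring_scope.

(* Nodes are 'I_n (0-based).  Neighborhood i : 'I_K is enumerated by the tuple
   S i : (kappa i).-tuple 'I_n, so s^i_j = tnth (S i) j for j : 'I_(kappa i). *)

Section Defs.
Variables (n K : nat) (kappa : 'I_K -> nat) (S : forall i, (kappa i).-tuple 'I_n).

Definition loads (i : 'I_K) (x : 'I_n -> nat) : seq nat := map x (S i).

Definition jmin (i : 'I_K) (x : 'I_n -> nat) : nat :=
  let L := loads i x in find (fun v => all (fun w => (v <= w)%N) L) L.

(* j_max(x): last index (0-based) of S_i at which x is maximal over S_i *)
Definition jmax (i : 'I_K) (x : 'I_n -> nat) : nat :=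
  let L := loads i x in
  ((size L).-1 - find (fun v => all (fun w => (w <= v)%N) L) (rev L))%N.

Definition xmin (i : 'I_K) (x : 'I_n -> nat) : nat := nth 0%N (loads i x) (jmin i x).
Definition xmax (i : 'I_K) (x : 'I_n -> nat) : nat := nth 0%N (loads i x) (jmax i x).

Definition add_item (x : 'I_n -> nat) (l : 'I_n) : 'I_n -> nat :=
  fun k => (x k + (k == l))%N.

Variable R : realFieldType.

(* epsilon-PSERP: probability that an item arriving at S_i, when the
   configuration is x, is stored at s^i_j. *)
Definition pserp (alpha : forall i, 'I_(kappa i) -> R) (lam : 'I_K -> R) (eps : R)
  (x : 'I_n -> nat) (i : 'I_K) (j : 'I_(kappa i)) : R :=
  if kappa i == 1%N then 1
  else if (j : nat) == jmin i x then (alpha i j + eps) / lam i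
  else if (j : nat) == jmax i x then (alpha i j - eps) / lam i
  else alpha i j / lam i.

(* One step of the embedded chain X^e: the next arrival (superposition of the
   independent Poisson processes with rates lam i, sum lam = 1) comes from
   neighborhood S_i with probability lam i; it is then routed to s^i_j with
   probability route x i j.  Hence, for g : N^n -> R,
   E[g(X^e(m+1)) | X^e(m) = x] = embedded_cond_exp route g x. *)
Definition embedded_cond_exp (lam : 'I_K -> R)
  (route : ('I_n -> nat) -> forall i : 'I_K, 'I_(kappa i) -> R)
  (g : ('I_n -> nat) -> R) (x : 'I_n -> nat) : R :=
  \sum_(i < K) \sum_(j < kappa i) lam i * route x i j * g (add_item x (tnth (S i) j)).

End Defs.

Definition fdisp (R : realFieldType) (n : nat) (y : 'I_n -> nat) : R :=
  \sum_(l < n) ((y l)%:R - n%:R^-1 * \sum_(k < n) (y k)%:R) ^+ 2.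

From mathcomp Require Import all_boot all_order all_algebra.
From mathcomp Require Import ring zify.
Import Order.TTheory GRing.Theory Num.Theory.

Set Implicit Arguments.
Unset Strict Implicit.
Unset Printing Implicit Defensive.

(* Storing one item at node [l] changes [f] by [2 x_l + c] with
   [c = 1 - (2 sum_k x_k + 1) / n], so the drift is [sum_ij w_ij (2 x_(s_ij) + c)]
   for the routing weights [w_ij = lam_i p_ij].  Under eps-PSERP, [w_ij] is [alpha_ij]
   with mass [eps] moved from the last maximally loaded node of [S_i] to the first
   minimally loaded one.  Moving that mass contributes [-2 eps (x_max - x_min)];
   by the balance equations the [alpha]-part is [(1/n) sum_l (2 x_l + c)], which
   collapses to [1 - 1/n]. *)

Section LeastElement.
Variables (T : eqType) (r : rel T).
Hypotheses (r_total : total r) (r_trans : transitive r).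

Lemma has_least (s : seq T) : s != [::] -> has (fun v => all (r v) s) s.
Proof.
have r_refl a : r a a by case/orP: (r_total a a).
elim: s => [|a t IH] // _.
have [-> | /IH /hasP[v vt /allP v_least]] := eqVneq t [::]; first by rewrite /= r_refl.
case/orP: (r_total a v) => [av | va]; apply/orP; [left | right].
  by rewrite /= r_refl; apply/allP => w /v_least; apply: r_trans.
by apply/hasP; exists v; rewrite //= va; apply/allP.
Qed.

End LeastElement.

Lemma first_min_index_neq_last_max_index (s : seq nat) : (1 < size s)%N ->
  find (fun v => all (fun w => v <= w) s) s
  != ((size s).-1 - find (fun v => all (fun w => w <= v) s) (rev s))%N.
Proof.
(* If both indices coincide, [s] is constant; then the first minimiser is [0] and
   the last maximiser is [(size s).-1]. *)
move=> s_gt1; set pmin := fun v => _; set pmax := fun v => _.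
have s_nil : s != [::] by rewrite -size_eq0 -lt0n ltnW.
have geq_total : total (fun v w => w <= v) by move=> v w; rewrite orbC leq_total.
have geq_trans : transitive (fun v w => w <= v) by move=> v u w uv wv; apply: leq_trans wv uv.
have has_min : has pmin s := has_least leq_total leq_trans s_nil.
have has_max : has pmax (rev s) by rewrite has_rev; apply: has_least.
apply/eqP => same_index.
have min_at := nth_find 0%N has_min.
have max_at := nth_find 0%N has_max.
move: (has_max); rewrite has_find size_rev => max_lt.
rewrite nth_rev ?size_rev // subnS -subn1 subnAC subn1 -same_index in max_at.
set v := nth 0%N s _ in min_at max_at.
have s_const w : w \in s -> w = v.
  by move=> ws; apply/eqP; rewrite eqn_leq (allP max_at) ?(allP min_at).
have find_head (p : pred nat) (t : seq nat) : p (head 0%N t) -> find p t = 0%N.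
  by case: t => //= a t ->.
have s_head : head 0%N s \in s by rewrite -nth0 mem_nth // ltnW.
have min0 : find pmin s = 0%N by apply: find_head; rewrite /pmin (s_const _ s_head).
have max0 : find pmax (rev s) = 0%N.
  apply: find_head; rewrite /pmax (s_const (head 0%N (rev s))) //.
  by rewrite -mem_rev -nth0 mem_nth // size_rev ltnW.
by move: same_index; rewrite min0 max0; lia.
Qed.

Section Neighborhoods.
Variables (n K : nat) (kappa : 'I_K -> nat) (S : forall i, (kappa i).-tuple 'I_n).
Variables (i : 'I_K) (x : 'I_n -> nat).

Lemma size_loads : size (loads S i x) = kappa i.
Proof. by rewrite size_map size_tuple. Qed.

Lemma nth_loads (j : 'I_(kappa i)) : nth 0%N (loads S i x) j = x (tnth (S i) j).
Proof. by rewrite (nth_map (tnth (S i) j)) ?size_tuple // -tnth_nth. Qed.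

Lemma jmin_lt : (0 < kappa i)%N -> (jmin S i x < kappa i)%N.
Proof.
move=> k_gt0; rewrite -size_loads -has_find; apply: (has_least leq_total leq_trans).
by rewrite -size_eq0 size_loads -lt0n.
Qed.

Lemma jmax_lt : (0 < kappa i)%N -> (jmax S i x < kappa i)%N.
Proof. by rewrite /jmax size_loads; lia. Qed.

Lemma jmin_neq_jmax : (1 < kappa i)%N -> jmin S i x != jmax S i x.
Proof. by rewrite -size_loads; apply: first_min_index_neq_last_max_index. Qed.

End Neighborhoods.

Local Open Scope ring_scope.

Lemma sum_indicatorM (R : pzSemiRingType) (I : finType) (i : I) (F : I -> R) :
  \sum_j (j == i)%:R * F j = F i.
Proof.
rewrite -(big_pred1_eq +%R i F) big_mkcond.
by apply: eq_bigr => j _; rewrite mulr_natl mulrb.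
Qed.

Lemma sum_ord_indicatorM (R : pzSemiRingType) (k m : nat) (F : nat -> R) : (m < k)%N ->
  \sum_(j < k) (j == m :> nat)%:R * F j = F m.
Proof.
move=> m_lt; have := big_ord1_eq +%R F m k; rewrite m_lt => <-.
by rewrite [RHS]big_mkcond; apply: eq_bigr => j _; rewrite mulr_natl mulrb.
Qed.

Lemma sum_sq_dev (F : fieldType) n (y : 'I_n -> F) :
  \sum_(l < n) (y l - n%:R^-1 * \sum_(k < n) y k) ^+ 2
  = \sum_(l < n) y l ^+ 2 - n%:R^-1 * (\sum_(k < n) y k) ^+ 2.
Proof.
set T := \sum_(k < n) y k.
under eq_bigr do rewrite sqrrB.
rewrite !big_split /= sumrN sumrMnl -mulr_suml sumr_const card_ord -/T.
have [-> | n_neq0] := eqVneq (n%:R : F) 0.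
  by rewrite invr0 !mul0r mulr0 expr0n mul0rn mul0rn subr0 addr0.
by rewrite -mulr_natr; field.
Qed.

Lemma sum_add_item (V : zmodType) n (x : 'I_n -> nat) (l : 'I_n) (G : nat -> V) :
  \sum_(k < n) G (add_item x l k) = \sum_(k < n) G (x k) + (G (x l).+1 - G (x l)).
Proof.
rewrite (bigD1 l) // [in RHS](bigD1 l) //= /add_item eqxx addn1 addrAC [G (x l) + _]addrC subrK.
by congr (_ + _); apply: eq_bigr => k /negbTE ->; rewrite addn0.
Qed.

Lemma fdisp_add_item (R : realFieldType) n (x : 'I_n -> nat) (l : 'I_n) :
  fdisp R (add_item x l) - fdisp R x
  = 2 * (x l)%:R + 1 - (2 * \sum_(k < n) (x k)%:R + 1) / n%:R.
Proof.
rewrite /fdisp !sum_sq_dev (sum_add_item x l (fun v => v%:R ^+ 2 : R)).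
rewrite (sum_add_item x l (fun v => v%:R : R)) -natr1.
by ring.
Qed.

Lemma sum_balanced (R : comPzSemiRingType) n K (kappa : 'I_K -> nat)
    (S : forall i, (kappa i).-tuple 'I_n) (alpha : forall i, 'I_(kappa i) -> R) (w : R) :
  (forall l : 'I_n, \sum_(i < K) \sum_(j < kappa i) alpha i j * (l == tnth (S i) j)%:R = w) ->
  forall F : 'I_n -> R,
  \sum_(i < K) \sum_(j < kappa i) alpha i j * F (tnth (S i) j) = w * \sum_(l < n) F l.
Proof.
move=> node_weight F.
under eq_bigr => i _ do
  under eq_bigr => j _ do rewrite -(sum_indicatorM (tnth (S i) j) F) mulr_sumr.
under eq_bigr do rewrite exchange_big.
rewrite exchange_big mulr_sumr; apply: eq_bigr => l _.
rewrite -(node_weight l) mulr_suml; apply: eq_bigr => i _.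
by rewrite mulr_suml; apply: eq_bigr => j _; rewrite mulrA.
Qed.

Lemma sum_shift_mass (R : comPzRingType) k (a : 'I_k -> R) (H : nat -> R) (e : R) (p q : nat) :
  (p < k)%N -> (q < k)%N ->
  \sum_(j < k) (a j + e * ((j == p :> nat)%:R - (j == q :> nat)%:R)) * H j
  = \sum_(j < k) a j * H j + e * (H p - H q).
Proof.
move=> p_lt q_lt; under eq_bigr do rewrite mulrDl -mulrA mulrBl.
by rewrite big_split /= -mulr_sumr sumrB !sum_ord_indicatorM.
Qed.

Section Pserp.
Variables (R : realFieldType) (n K : nat) (kappa : 'I_K -> nat)
  (S : forall i, (kappa i).-tuple 'I_n)
  (lam : 'I_K -> R) (alpha : forall i, 'I_(kappa i) -> R) (eps : R).
Arguments alpha : clear implicits.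
Variables (i : 'I_K) (x : 'I_n -> nat).
Hypotheses (kappa_gt0 : (0 < kappa i)%N) (lam_neq0 : lam i != 0)
  (sum_alpha : \sum_(j < kappa i) alpha i j = lam i).

(* For [kappa i = 1] PSERP routes with probability [1]; this still fits the formula
   because then [jmin = jmax = 0] and [alpha i 0 = lam i]. *)
Lemma pserp_weight (j : 'I_(kappa i)) :
  lam i * pserp S alpha lam eps x j
  = alpha i j + eps * ((j == jmin S i x :> nat)%:R - (j == jmax S i x :> nat)%:R).
Proof.
rewrite /pserp; have [k1 | k_neq1] := eqVneq (kappa i) 1%N.
  have lt1 (m : nat) : (m < kappa i)%N -> m = 0%N by rewrite k1; lia.
  rewrite (lt1 _ (jmin_lt S x kappa_gt0)) (lt1 _ (jmax_lt S x kappa_gt0)) subrr mulr0 addr0 mulr1.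
  rewrite -sum_alpha (bigD1 j) //= big1 ?addr0 // => j' j'_neq.
  by case/eqP: j'_neq; apply: val_inj; rewrite /= (lt1 _ (ltn_ord j)) (lt1 _ (ltn_ord j')).
have k_gt1 : (1 < kappa i)%N by rewrite ltn_neqAle eq_sym k_neq1 kappa_gt0.
have jmin_neq := jmin_neq_jmax S x k_gt1.
have [-> | _] := eqVneq (j : nat) (jmin S i x).
  by rewrite (negbTE jmin_neq) /=; field.
by have [_ | _] := eqVneq (j : nat) (jmax S i x); rewrite /=; field.
Qed.

Lemma sum_pserp (G : nat -> R) :
  \sum_(j < kappa i) lam i * pserp S alpha lam eps x j * G (x (tnth (S i) j))
  = \sum_(j < kappa i) alpha i j * G (x (tnth (S i) j))
    + eps * (G (xmin S i x) - G (xmax S i x)).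
Proof.
under eq_bigr do rewrite pserp_weight -nth_loads.
rewrite (sum_shift_mass _ (fun m => G (nth 0%N (loads S i x) m))) ?jmin_lt ?jmax_lt //.
by under eq_bigr do rewrite nth_loads.
Qed.

End Pserp.

Theorem lemma3p1 (R : realFieldType) (n K : nat) (kappa : 'I_K -> nat)
  (S : forall i : 'I_K, (kappa i).-tuple 'I_n)
  (lam : 'I_K -> R) (alpha : forall i : 'I_K, 'I_(kappa i) -> R) (eps : R) :
  (forall i, (0 < kappa i)%N) ->
  (forall i, uniq (S i)) ->
  (forall l : 'I_n, exists i : 'I_K, l \in (S i : seq 'I_n)) ->
  (forall i, 0 < lam i) ->
  \sum_(i < K) lam i = 1 ->
  (forall i j, 0 < alpha i j) ->
  (forall i, \sum_(j < kappa i) alpha i j = lam i) ->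
  (forall l : 'I_n,
     \sum_(i < K) \sum_(j < kappa i) alpha i j * (l == tnth (S i) j)%:R = n%:R^-1) ->
  0 < eps ->
  (forall i j, eps < alpha i j) ->
  forall x : 'I_n -> nat,
    embedded_cond_exp S lam (pserp S alpha lam eps)
      (fun y => fdisp R y - fdisp R x) x
    = - 2 * eps * \sum_(i < K) ((xmax S i x)%:R - (xmin S i x)%:R) + 1 - n%:R^-1.
Proof.
(* Uniqueness, covering and the bounds on [alpha] and [eps] only make PSERP a
   probability distribution; the drift identity does not use them. *)
move=> kappa_gt0 _ _ lam_gt0 sum_lam _ sum_alpha balanced _ _ x.
(* [sum lam = 1] forces [K > 0], and every [S i] is a non-empty tuple of nodes. *)
have n_neq0 : n%:R != 0 :> R.
  rewrite pnatr_eq0; apply/eqP => n0; move: sum_lam; rewrite big1 => [/eqP | i _].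
    by rewrite eq_sym oner_eq0.
  by case: (tnth (S i) (Ordinal (kappa_gt0 i))) => m; rewrite n0.
set c : R := 1 - (2 * \sum_(k < n) (x k)%:R + 1) / n%:R.
rewrite /embedded_cond_exp.
under eq_bigr do under eq_bigr do rewrite fdisp_add_item -addrA -/c.
under eq_bigr => i _ do rewrite (sum_pserp S eps x (kappa_gt0 i) (lt0r_neq0 (lam_gt0 i))
                                   (sum_alpha i) (fun v => 2 * v%:R + c)) /=.
rewrite big_split /= (sum_balanced balanced (fun l => 2 * (x l)%:R + c)) -mulr_sumr.
rewrite big_split /= sumr_const card_ord -mulr_sumr -[c *+ n]mulr_natr.
rewrite [X in eps * X](_ : _ = -2 * \sum_(i < K) ((xmax S i x)%:R - (xmin S i x)%:R)).
  by rewrite /c; field.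
by rewrite mulr_sumr; apply: eq_bigr => i _; ring.
Qed.
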